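(* Let $S$ be an entropy function for a finite set $X$, and let $A_1\subset\cdots\subset A_m$ and $B_1\subset\cdots\subset B_n$ be subsets of $X$ with $A_m\cap B_n=\emptyset$. Then there exists an EDF $f$ for $S$ such that: $\sum_{x\in A_i}f(x)=S(A_i)$ for all $i=1,\dots,m$; $\sum_{y\in B_j}f(y)=-S(B_j)$ for all $j=1,\dots,n$; $f(x)\ge0$ for all $x\in A_1$; and $f(y)\le 0$ for all $y\in B_1$.
   Context: An entropy function for a finite set $X$ is a function $S:2^X\to[0,\infty)$ with $S(\emptyset)=0$, $S(A)+S(B)\ge S(A\cap B)+S(A\cup B)$ and $S(A)+S(B)\ge S(A\setminus B)+S(B\setminus A)$ for all $A,B\subseteq X$. An entanglement distribution function (EDF) for $S$ is a function $f:X\to\mathbb R$ with $\big|\sum_{x\in A}f(x)\big|\le S(A)$ for all $A\subseteq X$. *)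

From mathcomp Require Import all_boot all_order all_algebra.
From mathcomp Require Import reals.
Set Implicit Arguments. Unset Strict Implicit. Unset Printing Implicit Defensive.
Import Order.TTheory GRing.Theory Num.Theory.
Local Open Scope ring_scope.

Definition entropy_function (R : realType) (X : finType) (S : {set X} -> R) : Prop :=
  [/\ forall A, 0 <= S A,
      S set0 = 0,
      forall A B, S (A :&: B) + S (A :|: B) <= S A + S B
    & forall A B, S (A :\: B) + S (B :\: A) <= S A + S B].

Definition EDF (R : realType) (X : finType) (S : {set X} -> R) (f : X -> R) : Prop :=
  forall A : {set X}, `| \sum_(x in A) f x | <= S A.

(* Adjoin a purifying point [None] to X.  The function [purify S] on
   [option X] extends S, takes equal values on complementary sets and is
   submodular; weak monotonicity of S is exactly what its mixed cases need.
   Minimising [purify S] over the sets D with C :\: B_1 \subset D \subset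
   C :|: A_1 gives a submodular H <= purify S that increases along A_1,
   decreases along B_1 and equals [purify S] on sets containing A_1 and
   avoiding B_1.  The sets
   A_1, ..., A_m, ~: B_n, ..., ~: B_1 form a chain in [option X], so some
   injective ranking of [option X] makes all of them initial segments.  The
   greedy vector of H along this ranking is dominated by H on every set and
   tight on initial segments, so it sums to H [set: option X] = 0; restricted
   to X it is the required EDF, the bound on -f over E coming from the
   complement of E in [option X]. *)

From mathcomp Require Import all_boot all_order all_algebra.
From mathcomp Require Import reals lra.
Set Implicit Arguments. Unset Strict Implicit. Unset Printing Implicit Defensive.
Import Order.TTheory GRing.Theory Num.Theory.
Local Open Scope ring_scope.

Section Greedy.
Variables (R : realType) (Y : finType) (rho : Y -> nat) (h : {set Y} -> R).

Definition lower (y : Y) : {set Y} := [set z | rho z < rho y]%N.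

Definition down_closed (T : {set Y}) : Prop :=
  forall y z, y \in T -> z \notin T -> (rho y < rho z)%N.

Definition greedy (y : Y) : R := h (y |: lower y) - h (lower y).

Hypothesis rho_inj : injective rho.
Hypothesis h0 : h set0 = 0.
Hypothesis h_submod : forall U V, h (U :&: V) + h (U :|: V) <= h U + h V.

Lemma lower_down_closed y : down_closed (lower y).
Proof. by move=> z w; rewrite !inE -leqNgt; apply: leq_trans. Qed.

Lemma max_rank_exists (C : {set Y}) : C != set0 ->
  exists2 y, y \in C & {in C, forall z, rho z <= rho y}%N.
Proof.
case/set0Pn=> y0 Cy0.
by case: (@arg_maxnP _ y0 (mem C) rho Cy0) => y Cy ymax; exists y.
Qed.

Lemma max_rank_split (C : {set Y}) y :
  y \in C -> {in C, forall z, rho z <= rho y}%N ->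
  C :&: lower y = C :\ y /\ C :|: lower y = y |: lower y.
Proof.
move=> Cy ymax; split; apply/setP=> z; rewrite !inE.
- case: (eqVneq z y) => [->|zy]; first by rewrite ltnn andbF.
  case Cz: (z \in C) => //=; rewrite ltn_neqAle ymax // andbT.
  by apply: contra_neq zy; apply: rho_inj.
- case: (eqVneq z y) => [->|zy]; first by rewrite Cy.
  case Cz: (z \in C) => //=; rewrite ltn_neqAle ymax // andbT.
  by apply/esym; apply: contra_neq zy; apply: rho_inj.
Qed.

Lemma greedy_sum_le (C : {set Y}) : \sum_(z in C) greedy z <= h C.
Proof.
have [k] := ubnP #|C|; elim: k C => // k IH C; rewrite ltnS => Ck.
have [->|C0] := eqVneq C set0; first by rewrite big_set0 h0.
have [y Cy ymax] := max_rank_exists C0.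
have [CI CU] := max_rank_split Cy ymax.
have IHy : \sum_(z in C :\ y) greedy z <= h (C :\ y).
  by apply: IH; rewrite (cardsD1 y C) Cy in Ck.
have := h_submod C (lower y).
rewrite (big_setD1 y Cy) /= [greedy y]/greedy CI CU; lra.
Qed.

Lemma greedy_sum_down_closed (T : {set Y}) :
  down_closed T -> \sum_(z in T) greedy z = h T.
Proof.
have [k] := ubnP #|T|; elim: k T => // k IH T; rewrite ltnS => Tk Tdown.
have [->|T0] := eqVneq T set0; first by rewrite big_set0 h0.
have [y Ty ymax] := max_rank_exists T0.
have [TI TU] := max_rank_split Ty ymax.
have lowerT : lower y \subset T.
  apply/subsetP=> z; rewrite inE; apply: contraLR; rewrite -leqNgt.
  by move=> Tz; apply/ltnW/Tdown.
rewrite (setIidPr lowerT) in TI; rewrite (setUidPl lowerT) in TU.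
have card_lower : (#|lower y| < k)%N.
  by rewrite TI; rewrite (cardsD1 y T) Ty in Tk.
rewrite (big_setD1 y Ty) /= -TI IH //; last exact: lower_down_closed.
by rewrite /greedy [in RHS]TU addrNK.
Qed.

End Greedy.

Lemma refine_rank (Y : finType) (c : Y -> nat) :
  exists2 rho : Y -> nat,
    injective rho & forall y z, (c y < c z)%N -> (rho y < rho z)%N.
Proof.
exists (fun y => c y * #|{: Y}| + enum_rank y)%N.
  move=> y z /(congr1 (modn^~ #|{: Y}|)).
  by rewrite !modnMDl !modn_small ?ltn_ord // => /val_inj/enum_rank_inj.
move=> y z cyz; apply: (@leq_trans (c z * #|{: Y}|)%N); last exact: leq_addr.
apply: (@leq_trans (c y * #|{: Y}| + #|{: Y}|)%N); first by rewrite ltn_add2l.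
by rewrite -mulSnr leq_mul2r cyz orbT.
Qed.

Section Chain.
Variables (I Y : finType) (T : I -> {set Y}).
Hypothesis T_chain : forall s t, (T s \subset T t) || (T t \subset T s).

Let outside y := #|[set s | y \notin T s]|.

Lemma chain_outside_lt t y z :
  y \in T t -> z \notin T t -> (outside y < outside z)%N.
Proof.
move=> yt zt; apply: proper_card; apply/properP; split.
  apply/subsetP=> s; rewrite !inE; apply: contra => zs.
  case/orP: (T_chain s t) => /subsetP sub; last exact: sub.
  by rewrite (sub z zs) in zt.
by exists t; rewrite inE ?yt ?zt.
Qed.

Lemma chain_rank :
  exists2 rho : Y -> nat, injective rho & forall t, down_closed rho (T t).
Proof.
have [rho rho_inj rho_mono] := refine_rank outside.
by exists rho => // t y z yt zt; apply/rho_mono/(chain_outside_lt yt zt).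
Qed.

End Chain.

Section AdmissibleMin.
Variables (R : realType) (Y : finType) (g : {set Y} -> R) (P N : {set Y}).

Definition admissible (C D : {set Y}) : bool :=
  (C :\: N \subset D) && (D \subset C :|: P).

Definition adm_min (C : {set Y}) : R := g (Order.arg_min C (admissible C) g).

Hypothesis g_ge0 : forall D, 0 <= g D.
Hypothesis g_submod : forall U V, g (U :&: V) + g (U :|: V) <= g U + g V.

Lemma admissible_refl C : admissible C C.
Proof. by rewrite /admissible subsetDl subsetUl. Qed.

Lemma adm_minP C : exists2 D, admissible C D & adm_min C = g D.
Proof.
by rewrite /adm_min; case: (arg_minP g (admissible_refl C)) => D CD _; exists D.
Qed.

Lemma adm_min_le C D : admissible C D -> adm_min C <= g D.
Proof.
by rewrite /adm_min; case: (arg_minP g (admissible_refl C)) => D' _; apply.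
Qed.

Lemma adm_min_le_self C : adm_min C <= g C.
Proof. exact/adm_min_le/admissible_refl. Qed.

Lemma adm_min_ge0 C : 0 <= adm_min C.
Proof. by have [D _ ->] := adm_minP C. Qed.

Lemma admissibleI C C' D D' : admissible C D -> admissible C' D' ->
  admissible (C :&: C') (D :&: D').
Proof.
case/andP=> CD DC /andP[CD' DC']; apply/andP; split.
  by rewrite setDIl setISS.
by rewrite setUIl setISS.
Qed.

Lemma admissibleU C C' D D' : admissible C D -> admissible C' D' ->
  admissible (C :|: C') (D :|: D').
Proof.
case/andP=> CD DC /andP[CD' DC']; apply/andP; split.
  by rewrite setDUl setUSS.
by rewrite -[P]setUid setUACA setUSS.
Qed.

Lemma adm_min_submod C C' :
  adm_min (C :&: C') + adm_min (C :|: C') <= adm_min C + adm_min C'.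
Proof.
have [D CD ->] := adm_minP C; have [D' CD' ->] := adm_minP C'.
have := adm_min_le (admissibleI CD CD'); have := adm_min_le (admissibleU CD CD').
have := g_submod D D'; lra.
Qed.

Lemma adm_min_setU1_ge C y : y \in P -> adm_min C <= adm_min (y |: C).
Proof.
move=> Py; have [D /andP[CD DC] ->] := adm_minP (y |: C).
apply: adm_min_le; apply/andP; split.
  by apply: subset_trans CD; rewrite setSD ?subsetUr.
suff <- : (y |: C) :|: P = C :|: P by [].
by rewrite -setUA; apply/setUidPr; rewrite sub1set inE Py orbT.
Qed.

Lemma adm_min_setU1_le C y : y \in N -> adm_min (y |: C) <= adm_min C.
Proof.
move=> Ny; have [D /andP[CD DC] ->] := adm_minP C.
apply: adm_min_le; apply/andP; split.
  suff -> : (y |: C) :\: N = C :\: N by [].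
  rewrite setDUl (_ : [set y] :\: N = set0) ?set0U //.
  by apply/eqP; rewrite setD_eq0 sub1set.
by apply: subset_trans DC _; rewrite setSU ?subsetUr.
Qed.

Lemma adm_min_tight (T : {set Y}) :
  P \subset T -> [disjoint T & N] -> adm_min T = g T.
Proof.
move=> PT TN; have [D /andP[TD DT] ->] := adm_minP T.
congr g; apply/eqP.
by rewrite eqEsubset -{1}(setUidPl PT) DT -{1}(setDidPl TN) TD.
Qed.

End AdmissibleMin.

Section Purification.
Variables (R : realType) (X : finType) (S : {set X} -> R).
Hypothesis S_ge0 : forall U, 0 <= S U.
Hypothesis S0 : S set0 = 0.
Hypothesis S_submod : forall A B, S (A :&: B) + S (A :|: B) <= S A + S B.
Hypothesis S_wsubmod : forall A B, S (A :\: B) + S (B :\: A) <= S A + S B.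

Definition purify (C : {set option X}) : R :=
  if None \in C then S (~: (Some @^-1: C)) else S (Some @^-1: C).

Lemma purifyC C : purify (~: C) = purify C.
Proof. by rewrite /purify inE preimsetC setCK; case: (None \in C). Qed.

Lemma purify_imset (E : {set X}) : purify (Some @: E) = S E.
Proof.
have NoneE : None \notin Some @: E by apply/imsetP=> -[].
rewrite /purify (negPf NoneE); congr S.
by apply/setP=> x; rewrite inE mem_imset //; apply: Some_inj.
Qed.

Lemma purify_ge0 C : 0 <= purify C.
Proof. by rewrite /purify; case: ifP. Qed.

Lemma purify0 : purify set0 = 0.
Proof. by rewrite /purify inE preimset0. Qed.

Lemma wsubmod_setC A B : S (A :&: B) + S (~: (A :|: B)) <= S (~: A) + S B.
Proof.
have := S_wsubmod B (~: A).
by rewrite setDE setCK setIC setDE -setCU addrC [S B + _]addrC.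
Qed.

Lemma purify_submod C D :
  purify (C :&: D) + purify (C :|: D) <= purify C + purify D.
Proof.
rewrite /purify !inE preimsetI preimsetU.
case: (None \in C); case: (None \in D) => /=.
- by rewrite setCI setCU addrC S_submod.
- exact: wsubmod_setC.
- by rewrite setIC setUC [X in _ <= X]addrC wsubmod_setC.
- exact: S_submod.
Qed.

End Purification.

Section EntanglementDistribution.
Variables (R : realType) (X : finType) (S : {set X} -> R) (m n : nat)
  (A : 'I_m.+1 -> {set X}) (B : 'I_n.+1 -> {set X}).
Hypothesis A_chain : forall i j : 'I_m.+1, (i <= j)%N -> A i \subset A j.
Hypothesis B_chain : forall i j : 'I_n.+1, (i <= j)%N -> B i \subset B j.
Hypothesis AB_disjoint : A ord_max :&: B ord_max = set0.

Lemma chains_disjoint i j : [disjoint Some @: A i & Some @: B j].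
Proof.
rewrite -setI_eq0 -imsetI ?imset_eq0; last by move=> x y _ _ [].
rewrite setI_eq0.
apply: disjointW (@A_chain i ord_max (leq_ord i)) (@B_chain j ord_max (leq_ord j)) _.
by rewrite -setI_eq0 AB_disjoint.
Qed.

Definition chain (t : 'I_m.+1 + 'I_n.+1) : {set option X} :=
  match t with inl i => Some @: A i | inr j => ~: (Some @: B j) end.

Lemma chain_total s t : (chain s \subset chain t) || (chain t \subset chain s).
Proof.
case: s t => [i|j] [i'|j'] /=.
- case: (leqP i i') => [le|/ltnW le]; first by rewrite imsetS ?A_chain.
  by rewrite orbC imsetS ?A_chain.
- by rewrite -disjoints_subset chains_disjoint.
- by rewrite orbC -disjoints_subset chains_disjoint.
- case: (leqP j j') => [le|/ltnW le]; last by rewrite setCS imsetS ?B_chain.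
  by rewrite orbC setCS imsetS ?B_chain.
Qed.

Lemma A0_sub_chain t : Some @: A ord0 \subset chain t.
Proof.
case: t => [i|j] /=; first by rewrite imsetS ?A_chain.
by rewrite -disjoints_subset chains_disjoint.
Qed.

Lemma chain_disjoint_B0 t : [disjoint chain t & Some @: B ord0].
Proof.
case: t => [i|j] /=; first exact: chains_disjoint.
by rewrite disjoint_sym disjoints_subset setCK imsetS ?B_chain.
Qed.

Hypothesis S_ge0 : forall U, 0 <= S U.
Hypothesis S0 : S set0 = 0.
Hypothesis S_submod : forall U V, S (U :&: V) + S (U :|: V) <= S U + S V.
Hypothesis S_wsubmod : forall U V, S (U :\: V) + S (V :\: U) <= S U + S V.

Definition purified_min : {set option X} -> R :=
  adm_min (purify S) (Some @: A ord0) (Some @: B ord0).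

Lemma purified_min_eq0 C : purify S C = 0 -> purified_min C = 0.
Proof.
move=> SC0; apply/le_anti; rewrite adm_min_ge0 ?andbT; last exact: purify_ge0.
by rewrite -SC0 adm_min_le_self.
Qed.

Lemma purified_min0 : purified_min set0 = 0.
Proof. exact/purified_min_eq0/purify0. Qed.

Lemma purified_min_submod U V :
  purified_min (U :&: V) + purified_min (U :|: V) <= purified_min U + purified_min V.
Proof. by apply: adm_min_submod; apply: purify_submod. Qed.

Variable rho : option X -> nat.
Hypothesis rho_inj : injective rho.
Hypothesis rho_chain : forall t, down_closed rho (chain t).

Definition edf (x : X) : R := greedy rho purified_min (Some x).

Local Notation sumg C := (\sum_(z in C) greedy rho purified_min z).

Lemma sumg_le (C : {set option X}) : sumg C <= purify S C.
Proof.
apply: le_trans (adm_min_le_self _ _ _ C).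
exact: greedy_sum_le rho_inj purified_min0 purified_min_submod C.
Qed.

Lemma sumg_chain t : sumg (chain t) = purify S (chain t).
Proof.
rewrite (greedy_sum_down_closed rho_inj purified_min0 (@rho_chain t)).
exact: adm_min_tight (A0_sub_chain t) (chain_disjoint_B0 t).
Qed.

Lemma sumg_setC (C : {set option X}) : sumg (~: C) = - sumg C.
Proof.
have total : sumg [set: option X] = 0.
  have setT_down : down_closed rho [set: option X] by move=> y z _; rewrite inE.
  rewrite (greedy_sum_down_closed rho_inj purified_min0 setT_down).
  by apply: purified_min_eq0; rewrite -setC0 purifyC purify0.
move: total; rewrite (big_setID C) setTI setTD => /eqP.
by rewrite addr_eq0 => /eqP ->; rewrite opprK.
Qed.

Lemma sum_edf (E : {set X}) : \sum_(x in E) edf x = sumg (Some @: E).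
Proof. by rewrite big_imset //; move=> x y _ _ []. Qed.

Lemma edf_EDF : EDF S edf.
Proof.
move=> E; rewrite ler_norml sum_edf -(purify_imset S E); apply/andP; split.
  by rewrite lerNl -sumg_setC -purifyC sumg_le.
exact: sumg_le.
Qed.

Lemma edf_sum_A i : \sum_(x in A i) edf x = S (A i).
Proof. by rewrite sum_edf (sumg_chain (inl i)) purify_imset. Qed.

Lemma edf_sum_B j : \sum_(x in B j) edf x = - S (B j).
Proof.
rewrite sum_edf -[Some @: B j]setCK sumg_setC (sumg_chain (inr j)).
by rewrite purifyC purify_imset.
Qed.

Lemma edf_ge0 x : x \in A ord0 -> 0 <= edf x.
Proof.
by move=> Ax; rewrite subr_ge0 adm_min_setU1_ge // mem_imset //; apply: Some_inj.
Qed.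

Lemma edf_le0 x : x \in B ord0 -> edf x <= 0.
Proof.
by move=> Bx; rewrite subr_le0 adm_min_setU1_le // mem_imset //; apply: Some_inj.
Qed.

End EntanglementDistribution.

Theorem theorem19 (R : realType) (X : finType) (S : {set X} -> R)
  (m n : nat) (A : 'I_m.+1 -> {set X}) (B : 'I_n.+1 -> {set X}) :
  entropy_function S ->
  (forall i j : 'I_m.+1, (i <= j)%N -> A i \subset A j) ->
  (forall i j : 'I_n.+1, (i <= j)%N -> B i \subset B j) ->
  A ord_max :&: B ord_max = set0 ->
  exists f : X -> R,
    [/\ EDF S f,
        forall i, \sum_(x in A i) f x = S (A i),
        forall j, \sum_(y in B j) f y = - S (B j),
        forall x, x \in A ord0 -> 0 <= f x
      & forall y, y \in B ord0 -> f y <= 0].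
Proof.
case=> S_ge0 S0 S_submod S_wsubmod A_chain B_chain AB_disjoint.
have [rho rho_inj rho_chain] := chain_rank (chain_total A_chain B_chain AB_disjoint).
exists (edf S A B rho); split.
- exact: edf_EDF.
- exact: edf_sum_A.
- exact: edf_sum_B.
- exact: edf_ge0.
- exact: edf_le0.
Qed.
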